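(* Let $(X_t)_{t\ge0}$ be the Ornstein--Uhlenbeck process $dX_t=-X_t\,dt+\sqrt2\,dB_t$ started from a norm-subgaussian random vector $X_0=X$ in $\mathbb{R}^d$. If $T_1\ge\log\frac{\|X\|_{\psi_2}}{\sqrt d}$, then $\|X_{T_1}\|_{\psi_2}\le3\sqrt d$.
   Context: For an $\mathbb{R}^d$-valued random variable $X$, $\|X\|_{\psi_2}:=\inf\{t>0:\mathbb{E}[e^{\|X\|^2/t^2}]\le2\}$ ($\|\cdot\|$ Euclidean norm); $X$ is norm-subgaussian if this is finite. *)

From HB Require Import structures.
From mathcomp Require Import all_boot all_order all_algebra.
From mathcomp Require Import all_classical all_reals all_analysis.
From mathcomp Require Import normal_distribution.
Set Implicit Arguments. Unset Strict Implicit. Unset Printing Implicit Defensive.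
Import Order.TTheory GRing.Theory Num.Theory.
Local Open Scope classical_set_scope.
Local Open Scope ring_scope.

Definition sqnorm {R : realType} (n : nat) (x : 'I_n -> R) : R :=
  \sum_(i < n) x i ^+ 2.

(* ||Y||_{psi_2} = inf { t > 0 : E[exp(||Y||^2 / t^2)] <= 2 }, in \bar R
   (+oo when the set is empty). A random vector Y in R^n is given by its
   coordinate random variables Y i : T -> R. *)
Definition psi2 {d} {T : measurableType d} {R : realType}
  (P : probability T R) (n : nat) (Y : 'I_n -> T -> R) : \bar R :=
  ereal_inf [set t%:E | t in [set t : R | 0 < t /\
     (\int[P]_w (expR (sqnorm (fun i => Y i w) / t ^+ 2))%:E <= 2%:E)%E]].

(* Z = (Z_1..Z_n) is a standard Gaussian vector N(0, I_n) independent of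
   X = (X_1..X_n): joint law of (X, Z) on measurable rectangles is the
   product of the law of X and the n-fold product of N(0,1). *)
Definition indep_std_gaussian {d} {T : measurableType d} {R : realType}
  (P : probability T R) (n : nat) (X Z : 'I_n -> T -> R) : Prop :=
  forall (A B : 'I_n -> set R),
    (forall i, measurable (A i)) -> (forall i, measurable (B i)) ->
    P (\bigcap_(i in [set: 'I_n]) (X i @^-1` A i) `&`
       \bigcap_(i in [set: 'I_n]) (Z i @^-1` B i)) =
    (P (\bigcap_(i in [set: 'I_n]) (X i @^-1` A i)) *
     \prod_(i < n) normal_prob 0 1 (B i))%E.

(* Marginal at time t of the OU process dX_t = -X_t dt + sqrt 2 dB_t started
   at X_0 = X:  X_t = e^{-t} X + sqrt(1 - e^{-2t}) Z, Z ~ N(0,I) indep. of X. *)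
Definition ou_at {T : Type} {R : realType} (n : nat)
  (X Z : 'I_n -> T -> R) (t : R) : 'I_n -> T -> R :=
  fun i w => expR (- t) * X i w + Num.sqrt (1 - expR (- (2 * t))) * Z i w.

From HB Require Import structures.
From mathcomp Require Import all_boot all_order all_algebra.
From mathcomp Require Import all_classical all_reals all_analysis.
From mathcomp Require Import normal_distribution measurable_realfun.
From mathcomp Require Import ring lra.
Import Order.TTheory GRing.Theory Num.Theory.
Local Open Scope classical_set_scope.
Local Open Scope ring_scope.

(* Put a := e^{-T1} and s := sqrt (1 - e^{-2 T1}), so that X_{T1} = a X + s Z with s^2 <= 1,
   hence |X_{T1}|^2 <= 2 a^2 |X|^2 + 2 |Z|^2.  The hypothesis on T1 says a ||X||_{psi_2} <= sqrt d,
   so some t with a t < (6/5) sqrt d has E exp(|X|^2/t^2) <= 2 (any constant in (1, sqrt (3/2))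
   would do instead of 6/5), and then mu := 2 a^2 t^2 / (3 d) <= 1.  Convexity of exp, used twice,
   and Jensen's inequality over the coordinates of Z give pointwise
     exp(|X_{T1}|^2 / 9d) <= (1 - mu)/3 + (mu/3) exp(|X|^2/t^2) + 2/(3d) sum_i exp(Z_i^2/3),
   and E exp(Z_i^2/3) = sqrt 3 for a standard Gaussian Z_i, so
     E exp(|X_{T1}|^2 / 9d) <= (1 + mu)/3 + (2/3) sqrt 3 <= 2. *)

Section expR_convexity.
Context {R : realType}.

Lemma expR_convex (l a b : R) : 0 <= l <= 1 ->
  expR (l * a + (1 - l) * b) <= l * expR a + (1 - l) * expR b.
Proof. by case/andP=> l0 l1; exact: (convex_expR (Itv01 l0 l1) a b). Qed.

Lemma jensen_expR (I : finType) (w c : I -> R) :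
  (forall i, 0 <= w i) -> \sum_i w i = 1 ->
  expR (\sum_i w i * c i) <= \sum_i w i * expR (c i).
Proof.
move=> w0 w1; set m := \sum_i w i * c i.
have tangent x : expR m * (1 + (x - m)) <= expR x.
  by rewrite -[in leRHS](subrK m x) expRD mulrC ler_wpM2r ?expR_ge0 ?expR_ge1Dx.
apply: le_trans (ler_sum _ (fun i _ => ler_wpM2l (w0 i) (tangent (c i)))).
under eq_bigr do rewrite mulrCA mulrDr mulr1 mulrBr.
rewrite -mulr_sumr big_split sumrB /= -mulr_suml w1 -/m mul1r subrr.
by rewrite addr0 mulr1.
Qed.

Lemma expR_split_le {mu u v q : R} : 0 <= mu <= 1 ->
  q <= mu * u / 3 + 2 / 3 * v ->
  expR q <= (1 - mu) / 3 + mu / 3 * expR u + 2 / 3 * expR v.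
Proof.
move=> mu01 hq.
have third01 : 0 <= (1 / 3 : R) <= 1.
  by rewrite divr_ge0 //= ler_pdivrMr // mul1r ler1n.
have := expR_convex mu u 0 mu01; rewrite mulr0 addr0 expR0 mulr1 => hu.
have := expR_convex (1 / 3) (mu * u) v third01.
rewrite (_ : 1 - 1 / 3 = 2 / 3 :> R); last by field.
rewrite -ler_expR (_ : mu * u / 3 = 1 / 3 * (mu * u)) in hq; last by field.
lra.
Qed.

End expR_convexity.

Section sqnorm.
Context {R : realType} {n : nat}.
Implicit Types x y : 'I_n -> R.

Lemma sqnorm_ge0 x : 0 <= sqnorm x.
Proof. by apply: sumr_ge0 => i _; exact: sqr_ge0. Qed.

Lemma sqnormZ (c : R) x : sqnorm (fun i => c * x i) = c ^+ 2 * sqnorm x.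
Proof. by rewrite /sqnorm mulr_sumr; apply: eq_bigr => i _; rewrite exprMn. Qed.

Lemma sqnormD_le x y : sqnorm (fun i => x i + y i) <= 2 * (sqnorm x + sqnorm y).
Proof.
rewrite /sqnorm -big_split mulr_sumr /=; apply: ler_sum => i _.
have := sqr_ge0 (x i - y i); lra.
Qed.

End sqnorm.

Lemma expR_sqnorm_ou_le {R : realType} {n : nat} (a s t mu : R) (x z : 'I_n -> R) :
  (0 < n)%N -> s ^+ 2 <= 1 -> 0 < t -> 0 <= mu <= 1 ->
  2 * (a * t) ^+ 2 = 3 * n%:R * mu ->
  expR (sqnorm (fun i => a * x i + s * z i) / (3 * Num.sqrt n%:R) ^+ 2)
  <= (1 - mu) / 3 + mu / 3 * expR (sqnorm x / t ^+ 2)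
     + \sum_(i < n) 2 / (3 * n%:R) * expR (z i ^+ 2 / 3).
Proof.
move=> n_gt0 s1 t0 mu01 hmu; have n0 : 0 < n%:R :> R by rewrite ltr0n.
rewrite exprMn sqr_sqrtr ?ler0n //.
have jensen_z : expR (sqnorm z / (3 * n%:R)) <= \sum_i n%:R^-1 * expR (z i ^+ 2 / 3).
  rewrite [X in expR X](_ : _ = \sum_i n%:R^-1 * (z i ^+ 2 / 3)).
    apply: jensen_expR => [i|]; first by rewrite invr_ge0 ler0n.
    by rewrite sumr_const card_ord -[LHS]mulr_natr mulVf ?gt_eqF.
  by rewrite /sqnorm mulr_suml; apply: eq_bigr => i _; field; rewrite gt_eqF.
have hq : sqnorm (fun i => a * x i + s * z i) / (3 ^+ 2 * n%:R)
          <= mu * (sqnorm x / t ^+ 2) / 3 + 2 / 3 * (sqnorm z / (3 * n%:R)).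
  have hsz : s ^+ 2 * sqnorm z <= sqnorm z by rewrite ler_piMl ?sqnorm_ge0.
  have := sqnormD_le (fun i => a * x i) (fun i => s * z i).
  rewrite !sqnormZ => hD.
  rewrite (_ : mu * _ / 3 + _ = (2 * a ^+ 2 * sqnorm x + 2 * sqnorm z) / (3 ^+ 2 * n%:R)).
    by rewrite ler_pM2r ?invr_gt0 ?mulr_gt0 ?exprn_gt0 //; lra.
  have -> : mu = 2 * (a * t) ^+ 2 / (3 * n%:R) by rewrite hmu; field; rewrite gt_eqF.
  by field; rewrite !gt_eqF ?exprn_gt0.
apply: le_trans (expR_split_le mu01 hq) _.
rewrite lerD2l [leRHS](_ : _ = 2 / 3 * \sum_i n%:R^-1 * expR (z i ^+ 2 / 3)).
  by rewrite ler_pM2l ?divr_gt0.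
by rewrite mulr_sumr; apply: eq_bigr => i _; field; rewrite gt_eqF.
Qed.

Section normal_integrals.
Context {R : realType}.
Local Open Scope ereal_scope.

Lemma ge0_integral_normal_prob (m s : R) (h : R -> \bar R) :
  measurable_fun setT h -> (forall x, 0 <= h x) ->
  \int[normal_prob m s]_x h x =
  \int[lebesgue_measure]_x (h x * (normal_pdf m s x)%:E).
Proof.
move=> mh h0; have dom := normal_prob_dominates m s.
rewrite -(Radon_Nikodym_SigmaFinite.change_of_variables dom) //.
have iRN := Radon_Nikodym_SigmaFinite.f_integrable dom.
have mpdf : measurable_fun setT (fun x => (normal_pdf m s x)%:E).
  by apply/measurable_EFinP; exact: measurable_normal_pdf.
apply: ae_eq_integral => //.
- by apply: emeasurable_funM => //; exact: measurable_int iRN.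
- exact: emeasurable_funM.
- apply: ae_eqe_mul2l; apply: integral_ae_eq => //.
  by move=> A _ mA; rewrite -Radon_Nikodym_SigmaFinite.f_integral.
Qed.

Lemma expR_sqr_div3_normal_pdf01 (x : R) :
  (expR (x ^+ 2 / 3) * normal_pdf 0 1 x = Num.sqrt 3 * normal_pdf 0 (Num.sqrt 3) x)%R.
Proof.
have s3 : (0 < Num.sqrt (3 : R))%R by rewrite sqrtr_gt0.
have sp : (0 < Num.sqrt (pi *+ 2 : R))%R by rewrite sqrtr_gt0 mulrn_wgt0 // pi_gt0.
rewrite /normal_pdf oner_eq0 (negbTE (lt0r_neq0 s3)) /normal_peak /normal_fun.
rewrite sqr_sqrtr ?ler0n // expr1n !subr0.
rewrite mulrCA -expRD mul1r -mulrnAr sqrtrM ?ler0n // invfM.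
rewrite (_ : x ^+ 2 / 3 + - x ^+ 2 / 2 = - x ^+ 2 / (3 *+ 2))%R; last first.
  by rewrite -mulr_natr; field.
by field; rewrite (gt_eqF s3) (gt_eqF sp).
Qed.

Lemma integral_normal01_expR_sqr_div3 :
  \int[normal_prob (0 : R) 1]_x (expR (x ^+ 2 / 3))%:E = (Num.sqrt 3)%:E.
Proof.
have mh : measurable_fun setT (fun x : R => (expR (x ^+ 2 / 3))%:E).
  apply/measurable_EFinP; apply: measurableT_comp => //.
  by apply: measurable_funM => //; exact: exprn_measurable.
rewrite ge0_integral_normal_prob //.
under eq_integral do rewrite -EFinM expR_sqr_div3_normal_pdf01 EFinM.
rewrite ge0_integralZl //; first by rewrite integral_normal_pdf mule1.
- by apply/measurable_EFinP; exact: measurable_normal_pdf.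
- by move=> x _; rewrite lee_fin normal_pdf_ge0.
Qed.

End normal_integrals.

Lemma ge0_integral_law {d d'} {T : measurableType d} {U : measurableType d'}
    {R : realType} {P : measure T R} (mu : measure U R) {Y : T -> U} (h : U -> \bar R) :
  measurable_fun setT Y ->
  (forall B, measurable B -> P (Y @^-1` B) = mu B) ->
  measurable_fun setT h -> (forall y, (0 <= h y)%E) ->
  (\int[P]_w h (Y w) = \int[mu]_y h y)%E.
Proof.
move=> mY lawY mh h0.
transitivity (\int[pushforward P Y]_y h y)%E.
  by rewrite [RHS]ge0_integral_pushforward // preimage_setT.
by apply: eq_measure_integral => B mB _; exact: lawY.
Qed.

Lemma indep_std_gaussian_marginal {d} {T : measurableType d} {R : realType}
    (P : probability T R) (n : nat) (X Z : 'I_n -> T -> R) :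
  indep_std_gaussian P X Z ->
  forall i B, measurable B -> P (Z i @^-1` B) = normal_prob 0 1 B.
Proof.
move=> hind i B mB.
pose B_ j : set R := if j == i then B else setT.
have mB_ j : measurable (B_ j) by rewrite /B_; case: ifP.
have := hind (fun _ => setT) B_ (fun _ => measurableT) mB_.
have -> : \bigcap_(j in [set: 'I_n]) (X j @^-1` setT) = setT.
  by apply/seteqP; split => // w _ j _.
have -> : \bigcap_(j in [set: 'I_n]) (Z j @^-1` B_ j) = Z i @^-1` B.
  apply/seteqP; split => w /=; first by move=> /(_ i I); rewrite /B_ eqxx.
  by move=> Bw j _; rewrite /B_; case: eqP => [->|].
rewrite setTI probability_setT mul1e => ->.
rewrite (bigD1 i) //= /B_ eqxx big1 ?mule1 // => j /negbTE ->.
exact: probability_setT.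
Qed.

Section probability_integrals.
Context {d} {T : measurableType d} {R : realType} (P : probability T R).
Local Open Scope ereal_scope.

Lemma ge0_integral_affine (n : nat) (c0 c1 c2 : R) (G : T -> R) (H : 'I_n -> T -> R) :
  (0 <= c0)%R -> (0 <= c1)%R -> (0 <= c2)%R ->
  measurable_fun setT G -> (forall i, measurable_fun setT (H i)) ->
  (forall w, 0 <= G w)%R -> (forall i w, 0 <= H i w)%R ->
  \int[P]_w (c0 + c1 * G w + \sum_(i < n) c2 * H i w)%:E
  = c0%:E + c1%:E * \int[P]_w (G w)%:E + c2%:E * \sum_(i < n) \int[P]_w (H i w)%:E.
Proof.
move=> c00 c10 c20 mG mH G0 H0.
have mcG : measurable_fun setT (fun w => (c1 * G w)%:E).
  by apply/measurable_EFinP; exact: measurable_funM.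
have mcH i : measurable_fun setT (fun w => (c2 * H i w)%:E).
  by apply/measurable_EFinP; exact: measurable_funM.
have cH0 i w : 0 <= (c2 * H i w)%:E by rewrite lee_fin mulr_ge0.
under eq_integral do rewrite -addrA EFinD EFinD -sumEFin.
rewrite ge0_integralD //; first last.
- by apply: emeasurable_funD => //; exact: emeasurable_sum.
- by move=> w _; rewrite adde_ge0 ?sume_ge0 // lee_fin mulr_ge0.
rewrite ge0_integralD //; first last.
- exact: emeasurable_sum.
- by move=> w _; rewrite sume_ge0.
- by move=> w _; rewrite lee_fin mulr_ge0.
have -> : \int[P]__ c0%:E = c0%:E.
  by rewrite integral_cst // [X in _ * X]probability_setT mule1.
rewrite ge0_integral_sum // addeA; congr (_ + _ + _).
- under eq_integral do rewrite EFinM.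
  by rewrite ge0_integralZl //; [exact/measurable_EFinP | move=> w _; rewrite lee_fin].
- rewrite ge0_sume_distrr; last by move=> i _; apply: integral_ge0 => w _; rewrite lee_fin.
  apply: eq_bigr => i _; under eq_integral do rewrite EFinM.
  by rewrite ge0_integralZl //; [exact/measurable_EFinP | move=> w _; rewrite lee_fin].
Qed.
End probability_integrals.

Section psi2.
Context {d} {T : measurableType d} {R : realType} (P : probability T R).
Local Open Scope ereal_scope.

Lemma psi2_ge0 (n : nat) (Y : 'I_n -> T -> R) : 0 <= psi2 P Y.
Proof. by apply: le_ereal_inf_tmp => _ [t [t0 _] <-]; rewrite lee_fin ltW. Qed.

Lemma psi2_le (n : nat) (Y : 'I_n -> T -> R) (t : R) : (0 < t)%R ->
  \int[P]_w (expR (sqnorm (fun i => Y i w) / t ^+ 2))%:E <= 2%:E ->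
  psi2 P Y <= t%:E.
Proof. by move=> t0 tint; apply: ereal_inf_lbound; exists t. Qed.

Lemma psi2_lt (n : nat) (Y : 'I_n -> T -> R) (b : R) : psi2 P Y < b%:E ->
  exists t, [/\ (0 < t)%R, (t < b)%R &
    \int[P]_w (expR (sqnorm (fun i => Y i w) / t ^+ 2))%:E <= 2%:E].
Proof. by case/ereal_inf_lt => _ [t [t0 tint] <-]; rewrite lte_fin => tb; exists t. Qed.

Lemma psi2_ord0 (Y : 'I_0 -> T -> R) : psi2 P Y = 0.
Proof.
apply/eqP; rewrite eq_le psi2_ge0 andbT; apply/lee_addgt0Pr => e e0.
rewrite add0e; apply: psi2_le => //.
under eq_integral do rewrite /sqnorm big_ord0 mul0r expR0.
by rewrite integral_cst // [X in _ * X]probability_setT mul1e lee_fin ler1n.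
Qed.

End psi2.

Section ou_moment.
Context {d} {T : measurableType d} {R : realType} (P : probability T R).
Context {n : nat} {X Z : 'I_n -> T -> R}.
Hypotheses (mX : forall i, measurable_fun setT (X i))
  (mZ : forall i, measurable_fun setT (Z i))
  (lawZ : forall i B, measurable B -> P (Z i @^-1` B) = normal_prob 0 1 B).

Lemma integral_expR_sqnorm_ou_le2 (a s t : R) :
  (0 < n)%N -> s ^+ 2 <= 1 -> 0 < t -> 2 * (a * t) ^+ 2 <= 3 * n%:R ->
  (\int[P]_w (expR (sqnorm (fun i => X i w) / t ^+ 2))%:E <= 2%:E)%E ->
  (\int[P]_w (expR (sqnorm (fun i => a * X i w + s * Z i w)
                    / (3 * Num.sqrt n%:R) ^+ 2))%:E <= 2%:E)%E.
Proof.
move=> n_gt0 s1 t0 at_le intG; have n0 : 0 < n%:R :> R by rewrite ltr0n.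
pose mu := 2 * (a * t) ^+ 2 / (3 * n%:R).
have hmu : 2 * (a * t) ^+ 2 = 3 * n%:R * mu by rewrite /mu; field; rewrite gt_eqF.
have mu01 : 0 <= mu <= 1.
  rewrite /mu ler_pdivrMr ?mulr_gt0 // mul1r at_le andbT.
  by apply: divr_ge0; [exact: mulr_ge0 (sqr_ge0 _) | exact: mulr_ge0 (ltW n0)].
pose G w := expR (sqnorm (fun i => X i w) / t ^+ 2).
pose H i w := expR (Z i w ^+ 2 / 3).
have msqnorm (Y : 'I_n -> T -> R) : (forall i, measurable_fun setT (Y i)) ->
    measurable_fun setT (fun w => sqnorm (fun i => Y i w)).
  by move=> mY; apply: measurable_sum => i; exact: measurable_funX.
have mG : measurable_fun setT G.
  by apply: measurableT_comp => //; apply: measurable_funM => //; exact: msqnorm.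
have mH i : measurable_fun setT (H i).
  by apply: measurableT_comp => //; apply: measurable_funM => //; exact: measurable_funX.
have intH i : (\int[P]_w (H i w)%:E = (Num.sqrt 3)%:E)%E.
  rewrite (ge0_integral_law (normal_prob 0 1) (fun y => (expR (y ^+ 2 / 3))%:E) (mZ i) (lawZ i)).
  - exact: integral_normal01_expR_sqr_div3.
  - apply/measurable_EFinP; apply: measurableT_comp => //.
    by apply: measurable_funM => //; exact: exprn_measurable.
  - by move=> y; rewrite lee_fin expR_ge0.
apply: (@le_trans _ _ (\int[P]_w
    ((1 - mu) / 3 + mu / 3 * G w + \sum_(i < n) 2 / (3 * n%:R) * H i w)%:E)%E).
  apply: ge0_le_integral => //.
  - apply/measurable_EFinP; apply: measurableT_comp => //; apply: measurable_funM => //.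
    by apply: msqnorm => i; apply: measurable_funD; exact: measurable_funM.
  - apply/measurable_EFinP; apply: measurable_funD.
      by apply: measurable_funD => //; exact: measurable_funM.
    by apply: measurable_sum => i; exact: measurable_funM.
  - by move=> w _; rewrite lee_fin; exact: expR_sqnorm_ou_le.
clearbody mu; case/andP: (mu01) => mu0 mu1.
have G0 w : 0 <= G w by exact: expR_ge0.
have H0 i w : 0 <= H i w by exact: expR_ge0.
rewrite ge0_integral_affine ?divr_ge0 ?subr_ge0 //.
under eq_bigr do rewrite intH.
rewrite sumEFin sumr_const card_ord.
apply: (@le_trans _ _ (((1 - mu) / 3)%:E + (mu / 3)%:E * 2%:E
                       + (2 / (3 * n%:R))%:E * (Num.sqrt 3 *+ n)%:E)%E).
  by rewrite leeD2r // leeD2l // lee_wpmul2l // lee_fin divr_ge0.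
have sqrt3_le2 : Num.sqrt 3 <= 2 :> R.
  by rewrite -(@ler_pXn2r _ 2) ?nnegrE ?sqrtr_ge0 // sqr_sqrtr // -natrX ler_nat.
have cancel_n : 2 / (3 * n%:R) * (Num.sqrt 3 *+ n) = 2 / 3 * Num.sqrt 3 :> R.
  by rewrite -mulr_natr; field; rewrite gt_eqF.
rewrite -!EFinM -!EFinD lee_fin cancel_n; lra.
Qed.
End ou_moment.

Lemma mulr_expRN_le {R : realType} (k r T1 : R) : 0 <= k -> 0 < r ->
  k = 0 \/ ln (k / r) <= T1 -> k * expR (- T1) <= r.
Proof.
move=> k0 r0 hk; have [->|kpos] := eqVneq k 0; first by rewrite mul0r ltW.
case: hk => [/eqP|]; first by rewrite (negbTE kpos).
have kr0 : 0 < k / r by rewrite divr_gt0 // lt0r kpos.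
rewrite -ler_expR lnK // ler_pdivrMr // => hk.
by rewrite -ler_pdivlMr ?expR_gt0 // expRN invrK mulrC.
Qed.

Lemma sqr_sqrtr_le1 {R : realType} (x : R) : x <= 1 -> Num.sqrt x ^+ 2 <= 1.
Proof.
have [x0 x1|/ltr0_sqrtr -> _] := leP 0 x; last by rewrite expr0n ler01.
by rewrite sqr_sqrtr.
Qed.

Theorem lemma11 (d0 : measure_display) (T : measurableType d0) (R : realType)
  (P : probability T R) (d : nat) (X Z : 'I_d -> T -> R) (T1 : R) :
  (forall i, measurable_fun [set: T] (X i)) ->
  (forall i, measurable_fun [set: T] (Z i)) ->
  indep_std_gaussian P X Z ->
  (psi2 P X < +oo)%E ->
  0 <= T1 ->
  psi2 P X = 0%E \/ ln (fine (psi2 P X) / Num.sqrt d%:R) <= T1 ->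
  (psi2 P (ou_at X Z T1) <= (3 * Num.sqrt d%:R)%:E)%E.
Proof.
(* [0 <= T1] is not needed: for [T1 < 0], [Num.sqrt] of the negative number
   [1 - expR (- (2 * T1))] is the junk value [0], and [sqr_sqrtr_le1] covers it. *)
move=> mX mZ /indep_std_gaussian_marginal lawZ Xfin _ hT1.
case: d X Z mX mZ lawZ Xfin hT1 => [|n] X Z mX mZ lawZ Xfin hT1.
  by rewrite psi2_ord0 sqrtr0 mulr0.
set d := n.+1; have sd0 : 0 < Num.sqrt d%:R :> R by rewrite sqrtr_gt0 ltr0n.
set a := expR (- T1); have a0 : 0 < a by exact: expR_gt0.
have psi2X : psi2 P X = (fine (psi2 P X))%:E by rewrite fineK // ge0_fin_numE ?psi2_ge0.
have k_le : fine (psi2 P X) * a <= Num.sqrt d%:R.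
  apply: mulr_expRN_le => //; first by rewrite -lee_fin -psi2X psi2_ge0.
  by case: hT1 => [->|]; [left | right].
have /psi2_lt[t [t0 tb intX]] : (psi2 P X < (6 / 5 * Num.sqrt d%:R / a)%:E)%E.
  by rewrite psi2X lte_fin ltr_pdivlMr // (le_lt_trans k_le) // ltr_pMl //; lra.
apply: psi2_le; first by rewrite mulr_gt0.
apply: (integral_expR_sqnorm_ou_le2 P mX mZ lawZ _ _ t) => //.
- by apply: sqr_sqrtr_le1; rewrite gerBl expR_ge0.
- have at_lt : a * t < 6 / 5 * Num.sqrt d%:R by rewrite mulrC -ltr_pdivlMr.
  have at_sqr : (a * t) ^+ 2 <= (6 / 5 * Num.sqrt d%:R) ^+ 2.
    by rewrite ler_sqr ?nnegrE ?mulr_ge0 ?(ltW at_lt) ?(ltW a0) ?(ltW t0) ?(ltW sd0).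
  rewrite [in X in _ <= X]exprMn sqr_sqrtr ?ler0n // in at_sqr.
  by rewrite -/a -/d; have := ler0n R d; lra.
Qed.
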